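(* Let $m\ge1$ be a fixed integer. For the random key graph $G(n,X_n,Y_n)$ with $X_n\ge2$ for all large $n$ and edge probability satisfying $q_n\sim\frac{\ln n}{n}$, we have $$\mathbb{E}\Big[\exp\Big(-\frac{nq_n}{X_n}\Big|\bigcup_{i=1}^m S_i\Big|\Big)\Big]\le e^{-mnq_n}\,[1+o(1)]\quad(n\to\infty).$$
   Context: The random key graph $G(n,X_n,Y_n)$ (with $1\le X_n\le Y_n$ integers depending on $n$) has node set $\{v_1,\dots,v_n\}$; each node $v_i$ is independently assigned a set $S_i$ of $X_n$ distinct objects chosen uniformly at random among all $X_n$-element subsets of a pool of $Y_n$ objects; an undirected edge joins $v_i$ and $v_j$ ($i\ne j$) iff $S_i\cap S_j\neq\emptyset$. The edge probability is $q_n=1-\binom{Y_n-X_n}{X_n}/\binom{Y_n}{X_n}$. *)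

From mathcomp Require Import all_boot.
From Stdlib Require Import Reals.

Set Implicit Arguments.
Unset Strict Implicit.
Unset Printing Implicit Defensive.

Definition key_q (X Y : nat) : R :=
  (1 - INR 'C(Y - X, X) / INR 'C(Y, X))%R.

(* The key sets of nodes v_1..v_m: an m-tuple (S_1,...,S_m) of subsets of the
   pool 'I_Y; a tuple is admissible iff every S_i has exactly X elements. *)
Definition key_tuple_ok (m X Y : nat) (S : {ffun 'I_m -> {set 'I_Y}}) : bool :=
  [forall i, #|S i| == X].

Definition union_size (m Y : nat) (S : {ffun 'I_m -> {set 'I_Y}}) : nat :=
  #|\bigcup_(i < m) S i|.

(* E[ exp(-c |S_1 u ... u S_m|) ] where S_1..S_m are independent, each uniform
   over the X-element subsets of a pool of Y objects: every admissible tuple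
   has probability (1 / C(Y,X))^m. *)
Definition exp_union_expectation (m X Y : nat) (c : R) : R :=
  \big[Rplus/0%R]_(S : {ffun 'I_m -> {set 'I_Y}} | key_tuple_ok X S)
     ((/ INR 'C(Y, X)) ^ m * exp (- c * INR (union_size S)))%R.

(* Put c = n q_n / X_n and p = X_n / Y_n.  For a uniformly random X-subset S of
   the pool and a fixed set U, the moment generating function of |U :&: S| is at
   most that of a Binomial(|U|, p) variable, (1 + p (e^c - 1))^|U|: given that S
   contains a set A, a further point lies in S with probability
   (X - |A|) / (Y - |A|) <= p.  As |U :|: S| = |U| + X - |U :&: S|, adding the key
   sets one at a time gives
     E exp(-c |S_1 :|: ... :|: S_m|) <= e^(-c m X) (1 + p (e^c - 1))^('C(m, 2) X),
   and e^(-c m X) = e^(-m n q_n).  Since q_n >= 1 - exp(-X^2/Y), we get X^2/Y <= 2 q_n,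
   so the second factor is at most exp('C(m, 2) 2 q_n e^c); finally c <= (3/4) ln n
   and q_n <= (3/2) ln n / n make q_n e^c = O(ln n / n^(1/4)) = o(1). *)

From HB Require Import structures.
From Stdlib Require Import Reals Lra.
From mathcomp Require Import all_boot zify.

Set Implicit Arguments.
Unset Strict Implicit.
Unset Printing Implicit Defensive.

Section Supersets.
Variable T : finType.

Definition supersets (X : nat) (A : {set T}) : {set {set T}} :=
  [set S : {set T} | (#|S| == X) && (A \subset S)].

Lemma card_supersets X (A : {set T}) : #|A| <= X <= #|T| ->
  #|supersets X A| = 'C(#|T| - #|A|, X - #|A|).
Proof.
case/andP=> leAX leXT.
have ->: supersets X A = @setC T @^-1: [set B : {set T} | B \subset ~: A & #|B| == #|T| - X].
  apply/setP=> S; have := cardsC S; rewrite !inE subsetC setCK => cardSC.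
  by rewrite andbC; congr (_ && _); apply/idP/idP => /eqP ?; apply/eqP; lia.
rewrite card_preimset; last exact: setC_inj.
rewrite cards_draws cardsCs setCK -bin_sub; last lia.
by congr binomial; lia.
Qed.

Lemma card_supersetsU1 X (A : {set T}) b : X <= #|T| -> b \notin A ->
  (#|T| - #|A|) * #|supersets X (b |: A)| = (X - #|A|) * #|supersets X A|.
Proof.
move=> leXT bA; have cardbA : #|b |: A| = #|A|.+1 by rewrite cardsU1 bA.
have [ltAX | leXA] := ltnP #|A| X; last first.
  suff ->: supersets X (b |: A) = set0 by rewrite cards0 (_ : X - #|A| = 0) //; lia.
  apply/setP=> S; rewrite !inE; apply/negP=> /andP[/eqP cardS /subset_leq_card].
  by rewrite cardbA cardS; lia.
rewrite !card_supersets ?cardbA; try lia.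
have ->: X - #|A| = (X - #|A|.+1).+1 by lia.
by rewrite -mul_bin_diag; congr (_ * binomial _ _); lia.
Qed.

Lemma card_supersetsU1_le X (A : {set T}) b : X <= #|T| -> b \notin A ->
  #|supersets X (b |: A)| * #|T| <= X * #|supersets X A|.
Proof.
move=> leXT bA; have ltAT : #|A| < #|T|.
  by have := max_card (mem (b |: A)); rewrite cardsU1 bA.
rewrite -(@leq_pmul2l (#|T| - #|A|)); last lia.
rewrite mulnA card_supersetsU1 // mulnAC [Z in _ <= Z]mulnCA mulnA leq_mul2r.
by apply/orP; right; nia.
Qed.

End Supersets.

Section FfunCons.
Variables (rT : finType) (m : nat).

Definition ffun_cons (x : rT) (f : {ffun 'I_m -> rT}) : {ffun 'I_m.+1 -> rT} :=
  [ffun i => if unlift ord0 i is Some j then f j else x].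

Lemma ffun_cons0 (x : rT) (f : {ffun 'I_m -> rT}) : ffun_cons x f ord0 = x.
Proof. by rewrite ffunE unlift_none. Qed.

Lemma ffun_consS (x : rT) (f : {ffun 'I_m -> rT}) j : ffun_cons x f (lift ord0 j) = f j.
Proof. by rewrite ffunE liftK. Qed.

Lemma ffun_cons_bij : bijective (fun xf : rT * {ffun 'I_m -> rT} => ffun_cons xf.1 xf.2).
Proof.
exists (fun F : {ffun 'I_m.+1 -> rT} => (F ord0, [ffun j => F (lift ord0 j)])) => [[x f] | F] /=.
  by rewrite ffun_cons0; congr pair; apply/ffunP=> j; rewrite ffunE ffun_consS.
apply/ffunP=> i; rewrite ffunE; case: unliftP => [j -> | ->] //=.
by rewrite ffunE.
Qed.

Lemma forall_ffun_cons (P : pred rT) (x : rT) (f : {ffun 'I_m -> rT}) :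
  [forall i, P (ffun_cons x f i)] = P x && [forall j, P (f j)].
Proof.
apply/forallP/andP => [Pxf | [Px /forallP Pf] i].
  split; first by have := Pxf ord0; rewrite ffun_cons0.
  by apply/forallP=> j; have := Pxf (lift ord0 j); rewrite ffun_consS.
by rewrite ffunE; case: (unlift ord0 i).
Qed.

End FfunCons.

Lemma bigcup_ffun_cons (rT : finType) m (x : {set rT}) (f : {ffun 'I_m -> {set rT}}) :
  \bigcup_(i < m.+1) ffun_cons x f i = x :|: \bigcup_(i < m) f i.
Proof.
by rewrite big_ord_recl ffun_cons0; congr setU; apply: eq_bigr => j _; rewrite ffun_consS.
Qed.

Open Scope R_scope.

Lemma Rplus_associative : associative Rplus.
Proof. by move=> x y z; rewrite Rplus_assoc. Qed.

Lemma Rmult_associative : associative Rmult.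
Proof. by move=> x y z; rewrite Rmult_assoc. Qed.

HB.instance Definition _ :=
  Monoid.isComLaw.Build R 0 Rplus Rplus_associative Rplus_comm Rplus_0_l.
HB.instance Definition _ :=
  Monoid.isComLaw.Build R 1 Rmult Rmult_associative Rmult_comm Rmult_1_l.
HB.instance Definition _ := Monoid.isMulLaw.Build R 0 Rmult Rmult_0_l Rmult_0_r.
HB.instance Definition _ :=
  Monoid.isAddLaw.Build R Rmult Rplus Rmult_plus_distr_r Rmult_plus_distr_l.

Lemma Rsum_le (I : finType) (P : pred I) (F G : I -> R) :
  (forall i, P i -> F i <= G i) ->
  \big[Rplus/0]_(i | P i) F i <= \big[Rplus/0]_(i | P i) G i.
Proof.
by move=> leFG; apply: (big_ind2 Rle) => //; [apply: Rle_refl | apply: Rplus_le_compat].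
Qed.

Lemma Rsum_const (I : finType) (A : {pred I}) (a : R) :
  \big[Rplus/0]_(i in A) a = INR #|A| * a.
Proof. by rewrite big_const; elim: #|A| => [|k IHk]; rewrite ?iterS ?IHk ?S_INR /=; ring. Qed.

Lemma Rsum_ffun_cons (rT : finType) m (P : pred rT) (F : {ffun 'I_m.+1 -> rT} -> R) :
  \big[Rplus/0]_(S : {ffun 'I_m.+1 -> rT} | [forall i, P (S i)]) F S
  = \big[Rplus/0]_(x | P x)
      \big[Rplus/0]_(f : {ffun 'I_m -> rT} | [forall j, P (f j)]) F (ffun_cons x f).
Proof.
rewrite pair_big /= (reindex _ (onW_bij _ (@ffun_cons_bij _ m))) /=.
by apply: eq_bigl => -[x f]; rewrite forall_ffun_cons.
Qed.

Definition bern_mgf (p c : R) : R := 1 + p * (exp c - 1).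

Lemma bern_mgf_ge1 (p c : R) : 0 <= p -> 0 <= c -> 1 <= bern_mgf p c.
Proof.
move=> p_ge0 c_ge0; have := exp_ineq1_le c; rewrite /bern_mgf.
by have := Rmult_le_pos p (exp c - 1) p_ge0; lra.
Qed.

Section UniformSubset.
Variables (T : finType) (X : nat) (c : R).
Hypotheses (c_ge0 : 0 <= c) (leXT : (X <= #|T|)%N).

Let p := INR X / INR #|T|.

Let p_ge0 : 0 <= p.
Proof.
rewrite /p /Rdiv; have [-> | T_gt0] := posnP #|T|; first by rewrite Rinv_0 Rmult_0_r; lra.
by apply: Rmult_le_pos (pos_INR _) _; apply/Rlt_le/Rinv_0_lt_compat/lt_0_INR/ltP.
Qed.

Lemma sum_exp_card_setI_split (A U : {set T}) b : b \in U ->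
  \big[Rplus/0]_(S in supersets X A) exp (c * INR #|U :&: S|)
  = \big[Rplus/0]_(S in supersets X A) exp (c * INR #|(U :\ b) :&: S|)
    + (exp c - 1) * \big[Rplus/0]_(S in supersets X (b |: A)) exp (c * INR #|(U :\ b) :&: S|).
Proof.
move=> bU; rewrite [Z in _ + _ * Z](eq_bigl (fun S => (S \in supersets X A) && (b \in S))).
  rewrite big_mkcondr big_distrr -big_split /=; apply: eq_bigr => S _.
  rewrite (cardsD1 b) -setIDAC inE bU plus_INR.
  case: (b \in S) => /=; last by rewrite Rplus_0_l; ring.
  by rewrite Rmult_plus_distr_l Rmult_1_r exp_plus; ring.
by move=> S; rewrite !inE subUset sub1set -andbA [(A \subset S) && _]andbC.
Qed.

Lemma sum_exp_card_setI_le (A U : {set T}) : [disjoint A & U] ->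
  \big[Rplus/0]_(S in supersets X A) exp (c * INR #|U :&: S|)
  <= INR #|supersets X A| * bern_mgf p c ^ #|U|.
Proof.
have [k cardU] : {k | #|U| = k} by exists #|U|.
elim: k A U cardU => [|k IHk] A U cardU disjAU.
  have ->: U = set0 by apply/eqP; rewrite -cards_eq0 cardU.
  under eq_bigr do rewrite set0I cards0 Rmult_0_r exp_0.
  by rewrite Rsum_const cards0; apply: Req_le; ring.
have [b bU] : {b | b \in U} by apply/sigW/card_gt0P; rewrite cardU.
have cardUb : #|U :\ b| = k by move: cardU; rewrite (cardsD1 b) bU; lia.
have bA : b \notin A by rewrite (disjointFl disjAU bU).
have disjAUb : [disjoint A & U :\ b] := disjointWr (subD1set U b) disjAU.
have disjbAUb : [disjoint b |: A & U :\ b].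
  by rewrite disjoints_subset subUset sub1set !inE eqxx -disjoints_subset disjAUb.
have card_b : INR #|supersets X (b |: A)| <= p * INR #|supersets X A|.
  have T_gt0 : 0 < INR #|T| by apply/lt_0_INR/ltP/card_gt0P; exists b.
  have := le_INR _ _ (elimT leP (card_supersetsU1_le leXT bA)).
  rewrite !mult_INR => le_card; apply: (Rmult_le_reg_r (INR #|T|)) => //.
  by rewrite /p (_ : _ * _ * INR #|T| = INR X * INR #|supersets X A|) //; field; lra.
have ec_ge0 : 0 <= exp c - 1 by have := exp_ineq1_le c; lra.
have r_pow_ge0 : 0 <= bern_mgf p c ^ k.
  by apply: pow_le; have := bern_mgf_ge1 p_ge0 c_ge0; lra.
rewrite (sum_exp_card_setI_split _ bU) cardU.
apply: Rle_trans (Rplus_le_compat _ _ _ _ (IHk _ _ cardUb disjAUb)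
  (Rmult_le_compat_l _ _ _ ec_ge0 (IHk _ _ cardUb disjbAUb))) _.
rewrite cardUb /=.
have := Rmult_le_compat_l _ _ _ ec_ge0 (Rmult_le_compat_r _ _ _ r_pow_ge0 card_b).
suff ->: INR #|supersets X A| * (bern_mgf p c * bern_mgf p c ^ k)
  = INR #|supersets X A| * bern_mgf p c ^ k
    + (exp c - 1) * (p * INR #|supersets X A| * bern_mgf p c ^ k).
  exact: Rplus_le_compat_l.
by rewrite /bern_mgf; ring.
Qed.

Lemma sum_exp_card_setU_le (U0 : {set T}) :
  \big[Rplus/0]_(S : {set T} | #|S| == X) exp (- c * INR #|U0 :|: S|)
  <= exp (- c * (INR #|U0| + INR X)) * (INR 'C(#|T|, X) * bern_mgf p c ^ #|U0|).
Proof.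
have split_exp (S : {set T}) : #|S| == X ->
    exp (- c * INR #|U0 :|: S|) = exp (- c * (INR #|U0| + INR X)) * exp (c * INR #|U0 :&: S|).
  move=> /eqP cardS; rewrite -exp_plus; congr exp.
  have := cardsUI U0 S; rewrite cardS => /(congr1 INR); rewrite !plus_INR => card_eq.
  by rewrite (_ : INR #|U0 :|: S| = INR #|U0| + INR X - INR #|U0 :&: S|); [ring | lra].
rewrite (eq_bigr _ split_exp) -big_distrr /=.
apply: Rmult_le_compat_l; first exact/Rlt_le/exp_pos.
have := @sum_exp_card_setI_le set0 U0; rewrite disjoints_subset sub0set.
rewrite card_supersets ?cards0 ?subn0 // => /(_ isT); apply: Rle_trans; apply: Req_le.
by apply: eq_bigl => S; rewrite inE sub0set andbT.
Qed.

Lemma sum_exp_card_bigcup_le m (U0 : {set T}) :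
  \big[Rplus/0]_(S : {ffun 'I_m -> {set T}} | [forall i, #|S i| == X])
      exp (- c * INR #|U0 :|: \bigcup_(i < m) S i|)
  <= INR 'C(#|T|, X) ^ m * exp (- c * (INR #|U0| + INR m * INR X))
       * bern_mgf p c ^ (m * #|U0| + 'C(m, 2) * X).
Proof.
have r_ge1 : 1 <= bern_mgf p c by exact: bern_mgf_ge1.
elim: m U0 => [|m IHm] U0.
  under eq_bigr do rewrite big_ord0 setU0.
  rewrite (eq_bigl predT) => [|S]; last by apply/forallP=> -[].
  rewrite Rsum_const card_ffun card_ord expn0 /= !Rmult_0_l Rplus_0_r; apply: Req_le; ring.
set N := INR 'C(#|T|, X) in IHm *; set r := bern_mgf p c in r_ge1 IHm *.
set K := N ^ m * exp (- c * (INR m * INR X)) * r ^ (m * (#|U0| + X) + 'C(m, 2) * X).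
have N_ge0 : 0 <= N by apply: pos_INR.
have K_ge0 : 0 <= K.
  by apply: Rmult_le_pos; [apply: Rmult_le_pos; [apply: pow_le N_ge0 | apply/Rlt_le/exp_pos]
                          | apply: pow_le; lra].
have inner (x : {set T}) : #|x| == X ->
    \big[Rplus/0]_(f : {ffun 'I_m -> {set T}} | [forall j, #|f j| == X])
      exp (- c * INR #|U0 :|: \bigcup_(i < m.+1) ffun_cons x f i|)
    <= K * exp (- c * INR #|U0 :|: x|).
  move=> /eqP cardx; under eq_bigr do rewrite bigcup_ffun_cons setUA.
  apply: Rle_trans (IHm _) _.
  have card_le : (#|U0 :|: x| <= #|U0| + X)%N by rewrite -cardx leq_card_setU.
  set coef := N ^ m * exp (- c * (INR m * INR X)) * exp (- c * INR #|U0 :|: x|).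
  have coef_ge0 : 0 <= coef.
    by apply: Rmult_le_pos; [apply: Rmult_le_pos; [apply: pow_le N_ge0 | ] | ]; apply/Rlt_le/exp_pos.
  have := Rle_pow _ _ _ r_ge1 (elimT leP (leq_add (leq_mul (leqnn m) card_le) (leqnn ('C(m, 2) * X)))).
  move/(Rmult_le_compat_l _ _ _ coef_ge0) => pow_le.
  rewrite /K Rmult_plus_distr_l exp_plus.
  apply: (Rle_trans _ (coef * r ^ (m * #|U0 :|: x| + 'C(m, 2) * X))).
    by apply: Req_le; rewrite /coef; ring.
  by apply: Rle_trans pow_le _; apply: Req_le; rewrite /coef; ring.
rewrite (Rsum_ffun_cons (fun S : {set T} => #|S| == X)).
apply: Rle_trans (Rsum_le inner) _; rewrite -big_distrr /=.
apply: Rle_trans (Rmult_le_compat_l _ _ _ K_ge0 (sum_exp_card_setU_le U0)) _.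
have -> : (m.+1 * #|U0| + 'C(m.+1, 2) * X = m * (#|U0| + X) + 'C(m, 2) * X + #|U0|)%N.
  by rewrite binS bin1; lia.
rewrite pow_add /K (_ : - c * (INR #|U0| + INR m.+1 * INR X)
    = - c * (INR m * INR X) + - c * (INR #|U0| + INR X)); last by rewrite S_INR; ring.
by rewrite exp_plus -/N -/r; apply: Req_le; ring.
Qed.

End UniformSubset.

Lemma exp_union_expectation_le (m X Y : nat) (c : R) : 0 <= c -> (X <= Y)%N ->
  exp_union_expectation m X Y c
  <= exp (- c * (INR m * INR X)) * bern_mgf (INR X / INR Y) c ^ ('C(m, 2) * X).
Proof.
move=> c_ge0 leXY; have leXT : (X <= #|'I_Y|)%N by rewrite card_ord.
have := sum_exp_card_bigcup_le c_ge0 leXT m set0.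
rewrite card_ord cards0 muln0 add0n Rplus_0_l => sum_le.
have C_gt0 : 0 < INR 'C(Y, X) by apply/lt_0_INR/ltP; rewrite bin_gt0.
rewrite /exp_union_expectation /union_size -big_distrr /=.
under eq_bigr do rewrite -[\bigcup_(i < m) _ i]set0U.
apply: Rle_trans (Rmult_le_compat_l _ _ _ (pow_le _ m (Rlt_le _ _ (Rinv_0_lt_compat _ C_gt0))) sum_le) _.
by rewrite -!Rmult_assoc -Rpow_mult_distr Rinv_l ?pow1 ?Rmult_1_l; [apply: Req_le | lra].
Qed.

Lemma exp_le_compat (x y : R) : x <= y -> exp x <= exp y.
Proof. by case=> [/exp_increasing/Rlt_le | ->] //; apply: Rle_refl. Qed.

Lemma exp_ge_sq (x : R) : 0 <= x -> x * x / 4 <= exp x.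
Proof.
move=> x_ge0; rewrite (_ : x = x / 2 + x / 2); last by field.
by rewrite exp_plus; have := exp_ineq1_le (x / 2); nra.
Qed.

Lemma pow_le_exp (b : R) (k : nat) : 0 <= 1 + b -> (1 + b) ^ k <= exp (INR k * b).
Proof.
move=> b_ge; elim: k => [|k IHk]; first by rewrite Rmult_0_l exp_0 /=; lra.
rewrite S_INR Rmult_plus_distr_r Rmult_1_l exp_plus /= Rmult_comm.
by apply: Rmult_le_compat => //; [apply: pow_le | apply: exp_ineq1_le].
Qed.

Lemma bern_mgf_pow_le (p c : R) (k : nat) : 0 <= p -> 0 <= c ->
  bern_mgf p c ^ k <= exp (INR k * p * exp c).
Proof.
move=> p_ge0 c_ge0; apply: Rle_trans (pow_le_exp _ _) _.
  by have := bern_mgf_ge1 p_ge0 c_ge0; rewrite /bern_mgf; lra.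
apply: exp_le_compat; rewrite Rmult_assoc; apply: Rmult_le_compat_l (pos_INR k) _.
by have := exp_pos c; nra.
Qed.

Lemma le_twice_of_one_sub_exp_le (t q : R) : 0 <= t -> q <= 1 / 2 ->
  1 - exp (- t) <= q -> t <= 2 * q.
Proof.
move=> t_ge0 q_le le_q.
have exp_opp : exp (- t) * exp t = 1 by rewrite -exp_plus Rplus_opp_l exp_0.
have le_1 : exp (- t) * (1 + t) <= 1.
  by rewrite -[X in _ <= X]exp_opp; apply: Rmult_le_compat_l (Rlt_le _ _ (exp_pos _)) (exp_ineq1_le t).
have := Rmult_le_compat_r (1 + t) _ _ ltac:(lra) (ltac:(lra) : 1 - q <= exp (- t)).
have := Rmult_le_pos _ _ t_ge0 (ltac:(lra) : 0 <= 1 / 2 - q).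
lra.
Qed.

Lemma exp_decay_le (L : R) : 0 < L -> L * exp (3 * L / 4) / exp L <= 64 / L.
Proof.
move=> L_gt0; have sq_le := exp_ge_sq (Rlt_le _ _ (Rdiv_lt_0_compat L 4 L_gt0 ltac:(lra))).
have e3_gt0 := exp_pos (3 * L / 4); have e1_gt0 := exp_pos (L / 4).
have -> : exp L = exp (3 * L / 4) * exp (L / 4) by rewrite -exp_plus; congr exp; field.
apply: (Rmult_le_reg_r (exp (L / 4) * L)); first exact: Rmult_lt_0_compat.
rewrite (_ : _ / _ * _ = L * L); last by field; split; apply: Rgt_not_eq.
rewrite (_ : 64 / L * _ = 64 * exp (L / 4)); last by field; apply: Rgt_not_eq.
lra.
Qed.

Lemma mul_exp_le_decay (L q c : R) : 0 < L -> 0 <= q -> q < 3 / 2 * (L / exp L) ->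
  c <= 3 * L / 4 -> q * exp c <= 96 / L.
Proof.
move=> L_gt0 q_ge0 q_lt c_le.
apply: Rle_trans (Rmult_le_compat _ _ _ _ q_ge0 (Rlt_le _ _ (exp_pos c))
  (Rlt_le _ _ q_lt) (exp_le_compat c_le)) _.
have := exp_decay_le L_gt0.
rewrite (_ : _ * _ * _ = 3 / 2 * (L * exp (3 * L / 4) / exp L)); last by field; apply: exp_neq_0.
by rewrite (_ : 96 / L = 3 / 2 * (64 / L)); [lra | field; lra].
Qed.

Lemma ffact_mul_exp_le (a b k : nat) : (a <= b)%N -> (a ^_ k * b ^ k <= b ^_ k * a ^ k)%N.
Proof.
move=> le_ab; elim: k => [|k IHk] //; rewrite !ffactnSr !expnSr.
have: ((a - k) * b <= (b - k) * a)%N.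
  by have [le_ka | lt_ak] := leqP k a; [nia | rewrite (_ : a - k = 0)%N //; lia].
by move/(leq_mul IHk); rewrite mulnACA [(b ^_ k * _ * _)%N]mulnACA.
Qed.

Lemma bin_sub_mul_exp_le (X Y : nat) : (X <= Y)%N ->
  ('C(Y - X, X) * Y ^ X <= 'C(Y, X) * (Y - X) ^ X)%N.
Proof.
move=> le_XY; rewrite -(leq_pmul2r (fact_gt0 X)) mulnAC [('C(Y, X) * _ * _)%N]mulnAC.
by rewrite !bin_ffact; apply/ffact_mul_exp_le/leq_subr.
Qed.

Lemma INR_expn (a k : nat) : INR (a ^ k)%N = INR a ^ k.
Proof. by elim: k => [|k IHk] //=; rewrite expnS mult_INR IHk. Qed.

Lemma key_q_ge (X Y : nat) : (X <= Y)%N ->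
  1 - exp (- (INR X * INR X / INR Y)) <= key_q X Y.
Proof.
move=> le_XY; have [-> | X_gt0] := posnP X.
  by rewrite /key_q subn0 !bin0 INR_0 INR_1 /Rdiv !Rmult_0_l Ropp_0 exp_0 Rinv_1; lra.
have Y_gt0 : 0 < INR Y by apply/lt_0_INR/ltP/(leq_trans X_gt0).
have C_gt0 : 0 < INR 'C(Y, X) by apply/lt_0_INR/ltP; rewrite bin_gt0.
have le_XY' : INR X <= INR Y by apply/le_INR/leP.
suff: INR 'C(Y - X, X) / INR 'C(Y, X) <= exp (- (INR X * INR X / INR Y)).
  by rewrite /key_q; lra.
have ratio_le : INR 'C(Y - X, X) / INR 'C(Y, X) <= (1 + - (INR X / INR Y)) ^ X.
  have := le_INR _ _ (elimT leP (bin_sub_mul_exp_le le_XY)).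
  rewrite !mult_INR !INR_expn minus_INR; last exact/leP.
  rewrite (_ : 1 + - (INR X / INR Y) = (INR Y - INR X) * / INR Y); last by field; lra.
  rewrite Rpow_mult_distr pow_inv => le_prod.
  have YX_gt0 := pow_lt _ X Y_gt0.
  apply: (Rmult_le_reg_r (INR 'C(Y, X) * INR Y ^ X)); first exact: Rmult_lt_0_compat.
  rewrite (_ : _ / _ * _ = INR 'C(Y - X, X) * INR Y ^ X); last by field; lra.
  by rewrite (_ : _ * _ * _ = INR 'C(Y, X) * (INR Y - INR X) ^ X) //; field; lra.
apply: Rle_trans ratio_le _; apply: Rle_trans (pow_le_exp _ _) _.
  suff: INR X / INR Y <= 1 by lra.
  by apply: (Rmult_le_reg_r (INR Y)) => //; rewrite /Rdiv Rmult_assoc Rinv_l; lra.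
by apply: Req_le; congr exp; field; lra.
Qed.

Lemma key_q_ge0 (X Y : nat) : (X <= Y)%N -> 0 <= key_q X Y.
Proof.
move=> le_XY; have C_gt0 : 0 < INR 'C(Y, X) by apply/lt_0_INR/ltP; rewrite bin_gt0.
have := le_INR _ _ (elimT leP (leq_bin2l X (leq_subr X Y))) => le_C.
suff: INR 'C(Y - X, X) / INR 'C(Y, X) <= 1 by rewrite /key_q; lra.
apply: (Rmult_le_reg_r (INR 'C(Y, X))) => //.
by rewrite /Rdiv Rmult_assoc Rinv_l ?Rmult_1_r ?Rmult_1_l //; lra.
Qed.

Lemma exp_le_1_add (a L eps : R) : 0 < eps -> 0 < L -> a / ln (1 + eps) <= L ->
  exp (a / L) <= 1 + eps.
Proof.
move=> eps_gt0 L_gt0 le_L.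
have ln_gt0 : 0 < ln (1 + eps) by rewrite -ln_1; apply: ln_increasing; lra.
rewrite -[1 + eps]exp_ln; last lra.
apply: exp_le_compat; apply: (Rmult_le_reg_r L) => //.
rewrite (_ : a / L * L = ln (1 + eps) * (a / ln (1 + eps))); last by field; lra.
exact: Rmult_le_compat_l (Rlt_le _ _ ln_gt0) le_L.
Qed.

Lemma Un_cv_ratio_lt (u v : nat -> R) : Un_cv (fun n => u n / v n) 1 ->
  exists N, forall n, (N <= n)%coq_nat -> 0 < v n -> u n < 3 / 2 * v n.
Proof.
case/(_ (1 / 2) ltac:(lra)) => N cv_N; exists N => n le_Nn v_gt0.
have [lt_ratio _] := Rabs_def2 _ _ (cv_N n le_Nn); rewrite /Rdiv in lt_ratio.
apply: (Rmult_lt_reg_r (/ v n)); first exact: Rinv_0_lt_compat.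
by rewrite (_ : 3 / 2 * v n * / v n = 3 / 2); [lra | field; lra].
Qed.

Lemma eventually_ln_ge (L0 : R) :
  exists N, forall n, (N <= n)%coq_nat -> 0 < INR n /\ L0 <= ln (INR n).
Proof.
have [N lt_N] := INR_archimed 1 (exp L0) Rlt_0_1; exists N => n le_Nn.
have lt_n : exp L0 < INR n by have := le_INR _ _ le_Nn; lra.
have n_gt0 : 0 < INR n by have := exp_pos L0; lra.
split=> //; rewrite -(ln_exp L0); left; exact: ln_increasing (exp_pos L0) lt_n.
Qed.

Lemma bern_mgf_key_pow_le (k X Y : nat) (L q : R) :
  (2 <= X <= Y)%N -> 192 <= L -> q < 3 / 2 * (L / exp L) ->
  1 - exp (- (INR X * INR X / INR Y)) <= q ->
  bern_mgf (INR X / INR Y) (exp L * q / INR X) ^ (k * X) <= exp (192 * INR k / L).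
Proof.
case/andP=> X_ge2 le_XY L_ge q_lt q_ge.
have X_ge2' : 2 <= INR X by apply: (le_INR 2); apply/leP.
have Y_gt0 : 0 < INR Y by have := le_INR _ _ (elimT leP le_XY); lra.
have eL_gt0 := exp_pos L.
set t := INR X * INR X / INR Y in q_ge *; set c := exp L * q / INR X.
have t_ge0 : 0 <= t.
  by apply: Rmult_le_pos; [apply: Rmult_le_pos; lra | apply/Rlt_le/Rinv_0_lt_compat].
have q_ge0 : 0 <= q.
  by have := exp_le_compat (ltac:(lra) : - t <= 0); rewrite exp_0; lra.
have c_ge0 : 0 <= c.
  by apply: Rmult_le_pos; [apply: Rmult_le_pos; lra | apply/Rlt_le/Rinv_0_lt_compat; lra].
have c_le : c <= 3 * L / 4.
  have eLq : exp L * q < 3 / 2 * L.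
    by move: q_lt; rewrite (_ : 3 / 2 * L = exp L * (3 / 2 * (L / exp L))); [apply: Rmult_lt_compat_l | field; lra].
  apply: (Rmult_le_reg_r (INR X)); first lra.
  rewrite /c (_ : _ / _ * _ = exp L * q); last by field; lra.
  by have := Rmult_le_pos (3 * L / 4) (INR X - 2) ltac:(lra) ltac:(lra); lra.
have q_exp_le := mul_exp_le_decay (ltac:(lra) : 0 < L) q_ge0 q_lt c_le.
have q_le : q <= 1 / 2.
  have : 96 / L <= 1 / 2.
    by apply: (Rmult_le_reg_r L); [lra | rewrite (_ : 96 / L * L = 96); [lra | field; lra]].
  have := Rmult_le_compat_l q _ _ q_ge0 (Rle_trans _ _ _ (ltac:(lra) : 1 <= 1 + c) (exp_ineq1_le c)).
  lra.
have t_le := le_twice_of_one_sub_exp_le t_ge0 q_le q_ge.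
have p_ge0 : 0 <= INR X / INR Y.
  by apply: Rmult_le_pos; [apply: pos_INR | apply/Rlt_le/Rinv_0_lt_compat].
apply: Rle_trans (bern_mgf_pow_le (k * X) p_ge0 c_ge0) _; apply: exp_le_compat.
rewrite mult_INR (_ : INR k * INR X * (INR X / INR Y) * exp c = INR k * (t * exp c)); last first.
  by rewrite /t; field; lra.
rewrite (_ : 192 * INR k / L = INR k * (2 * (96 / L))); last by field; lra.
apply: Rmult_le_compat_l (pos_INR k) _.
by have := Rmult_le_compat_r (exp c) _ _ (Rlt_le _ _ (exp_pos c)) t_le; lra.
Qed.

(* [all_boot] rebinds the delimiter [%R]; in the statement it means [R_scope]. *)
Delimit Scope R_scope with R.

Theorem mainTheorem7 (m : nat) (X Y : nat -> nat)
  (Hm : (1 <= m)%coq_nat)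
  (HXpos : forall n, (1 <= X n)%coq_nat)
  (HXY : forall n, (X n <= Y n)%coq_nat)
  (HX2 : exists N, forall n, (N <= n)%coq_nat -> (2 <= X n)%coq_nat)
  (Hq : Un_cv (fun n => (key_q (X n) (Y n) / (ln (INR n) / INR n))%R) 1%R) :
  forall eps : R, (0 < eps)%R ->
  exists N : nat, forall n : nat, (N <= n)%coq_nat ->
    (exp_union_expectation m (X n) (Y n)
        (INR n * key_q (X n) (Y n) / INR (X n))
     <= exp (- (INR m * INR n * key_q (X n) (Y n))) * (1 + eps))%R.
Proof.
move=> eps eps_gt0; set k := 'C(m, 2).
have [N1 X_ge2] := HX2.
have [N2 ln_ge] := eventually_ln_ge (Rmax 192 (192 * INR k / ln (1 + eps))).
have [N3 ratio_lt] := Un_cv_ratio_lt Hq.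
exists (N1 + N2 + N3)%coq_nat => n le_n.
have [n_gt0 L_ge] := ln_ge n ltac:(lia); set L := ln (INR n) in L_ge.
have L_ge192 := Rle_trans _ _ _ (Rmax_l _ _) L_ge.
have eL : exp L = INR n by apply: exp_ln.
have le_XY : (X n <= Y n)%N by apply/leP.
have le_X : (2 <= X n <= Y n)%N by rewrite le_XY andbT; apply/leP/X_ge2; lia.
have q_lt : key_q (X n) (Y n) < 3 / 2 * (L / exp L).
  by rewrite eL; apply: ratio_lt; [lia | rewrite -/L; apply: Rdiv_lt_0_compat; lra].
have X_gt0 : 0 < INR (X n) by apply/lt_0_INR/ltP; case/andP: le_X; lia.
have c_ge0 : 0 <= INR n * key_q (X n) (Y n) / INR (X n).
  apply: Rmult_le_pos; last exact/Rlt_le/Rinv_0_lt_compat.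
  by apply: Rmult_le_pos; [lra | exact: key_q_ge0].
apply: Rle_trans (exp_union_expectation_le m c_ge0 le_XY) _.
rewrite -eL (_ : - _ * (INR m * INR (X n)) = - (INR m * exp L * key_q (X n) (Y n))).
  apply: Rmult_le_compat_l (Rlt_le _ _ (exp_pos _)) _.
  apply: Rle_trans (bern_mgf_key_pow_le k le_X L_ge192 q_lt (key_q_ge le_XY)) _.
  by apply: exp_le_1_add; [| lra | apply: Rle_trans (Rmax_r _ _) L_ge].
by field; lra.
Qed.
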